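(* Let $R$ be a $*$-ring. The following are equivalent: (1) ${\rm psr}(R)=1$ and $R$ is $*$-abelian. (2) For any $a,b\in R$ with $aR+bR=R$ there exists a projection $p$ with $pa=ap$ such that $a+bp\in U(R)$. (3) ${\rm isr}(R)=1$ and every idempotent of $R$ is a projection. (4) $R$ is clean and every idempotent of $R$ is a projection; equivalently, $R$ is exchange and every idempotent of $R$ is a projection. (5) $R$ is $*$-clean and $*$-abelian. (6) $R$ is strongly $*$-clean. (7) For every $a\in R$ there exists a projection $p\in aR$ such that $1-p\in(1-a)R$.
   Context: Rings are associative with identity. A $*$-ring is a ring with an involution $*$ ($(x+y)^*=x^*+y^*$, $(xy)^*=y^*x^*$, $(x^* )^*=x$). A projection is $p$ with $p^2=p=p^*$; $U(R)$ is the unit group. $R$ is clean if each element is a sum of an idempotent and a unit; $*$-clean if each element is a sum of a projection and a unit; strongly $*$-clean if each element is a sum of a projection and a unit that commute. $R$ is exchange if for every $a\in R$ there is an idempotent $e\in aR$ with $1-e\in(1-a)R$. $R$ is $*$-abelian if every projection is central. ${\rm isr}(R)=1$ means: whenever $aR+bR=R$, there is an idempotent $e$ with $a+be\in U(R)$. ${\rm psr}(R)=1$ means: whenever $aR+bR=R$, there is a projection $p$ with $a+bp\in U(R)$. *)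

From HB Require Import structures.
From mathcomp Require Import all_boot all_order all_algebra.
Set Implicit Arguments. Unset Strict Implicit. Unset Printing Implicit Defensive.
Import GRing.Theory.
Local Open Scope ring_scope.

(* Rings: associative with identity (pzRingType allows the zero ring). *)
Section StarRing.
Variable R : pzRingType.

Definition is_involution (star : R -> R) : Prop :=
  (forall x y, star (x + y) = star x + star y) /\
  (forall x y, star (x * y) = star y * star x) /\
  (forall x, star (star x) = x).

Definition idem (e : R) : Prop := e * e = e.

Definition proj (star : R -> R) (p : R) : Prop := p * p = p /\ star p = p.

Definition unit_el (u : R) : Prop := exists v, u * v = 1 /\ v * u = 1.

Definition in_rR (a x : R) : Prop := exists r, x = a * r.

Definition rcomax (a b : R) : Prop :=
  forall r : R, exists x y, a * x + b * y = r.

Definition clean : Prop := forall a, exists e u, idem e /\ unit_el u /\ a = e + u.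

Definition star_clean (star : R -> R) : Prop :=
  forall a, exists p u, proj star p /\ unit_el u /\ a = p + u.

Definition strongly_star_clean (star : R -> R) : Prop :=
  forall a, exists p u, [/\ proj star p, unit_el u, p * u = u * p & a = p + u].

Definition exchange : Prop :=
  forall a, exists e, [/\ idem e, in_rR a e & in_rR (1 - a) (1 - e)].

Definition star_abelian (star : R -> R) : Prop :=
  forall p, proj star p -> forall x, p * x = x * p.

Definition isr1 : Prop :=
  forall a b, rcomax a b -> exists e, idem e /\ unit_el (a + b * e).

Definition psr1 (star : R -> R) : Prop :=
  forall a b, rcomax a b -> exists p, proj star p /\ unit_el (a + b * p).

Definition idem_are_proj (star : R -> R) : Prop :=
  forall e, idem e -> proj star e.
End StarRing.

(** Every condition forces all idempotents to be projections, and an idempotent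
   that is a projection together with all its perturbations [e + e x (1 - e)]
   must be central; so the ring is abelian.  In an abelian ring every one-sided
   inverse is two-sided, and invertibility can be checked separately on the
   corners [eR] and [(1 - e)R].  This makes an exchange ring clean (split [a]
   along the idempotent given by exchange), hence strongly [*]-clean, and
   gives stable range one with idempotents: for [ax + by = 1], exchange for
   [ax] yields [e] with [a] invertible on [eR] and [b] invertible on
   [(1 - e)R], and a clean decomposition in the second corner produces the
   idempotent. *)

From mathcomp Require Import all_boot all_order all_algebra.
Set Implicit Arguments. Unset Strict Implicit. Unset Printing Implicit Defensive.
Import GRing.Theory.
Local Open Scope ring_scope.

Section Idempotents.
Variable R : pzRingType.

Definition idem_central : Prop := forall e : R, idem e -> forall x, e * x = x * e.

Lemma idemC (e : R) : idem e -> idem (1 - e).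
Proof. by rewrite /idem => He; rewrite mulrBl mul1r mulrBr mulr1 He subrr subr0. Qed.

Lemma idem_mulC (e : R) : idem e -> e * (1 - e) = 0.
Proof. by move=> He; rewrite mulrBr mulr1 He subrr. Qed.

Lemma idem_Cmul (e : R) : idem e -> (1 - e) * e = 0.
Proof. by move=> He; rewrite mulrBl mul1r He subrr. Qed.

Lemma idemDnil (e y : R) :
  idem e -> e * y = y -> y * e = 0 -> y * y = 0 -> idem (e + y).
Proof.
by rewrite /idem mulrDl !mulrDr => He ey ye yy; rewrite He ey ye yy !addr0.
Qed.

Lemma rcomaxN1 (a : R) : rcomax a (-1).
Proof. by move=> r; exists 0, (- r); rewrite mulr0 add0r mulN1r opprK. Qed.

Lemma isr1_clean : isr1 R -> clean R.
Proof.
move=> Hisr a; have [e [He Hu]] := Hisr a (-1) (rcomaxN1 a).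
by exists e, (a + -1 * e); split => //; split => //; rewrite mulN1r subrKC.
Qed.

End Idempotents.

Section AbelianRing.
Variable R : pzRingType.
Hypothesis idemZ : idem_central R.

Lemma abelian_mul_eq1C (x y : R) : x * y = 1 -> y * x = 1.
Proof.
move=> xy1.
have Hyx : idem (y * x) by rewrite /idem mulrA -(mulrA y) xy1 mulr1.
have : y * x * x * y = 1 by rewrite (idemZ Hyx x) mulrA xy1 mul1r xy1.
by rewrite -mulrA xy1 mulr1.
Qed.

Lemma abelian_unit_corners (e u x y : R) :
  idem e -> u * e * x = e -> u * (1 - e) * y = 1 - e -> unit_el u.
Proof.
move=> He ue ue'; pose v := e * x + (1 - e) * y.
have uv1 : u * v = 1 by rewrite mulrDr !mulrA ue ue' subrKC.
by exists v; split => //; apply: abelian_mul_eq1C.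
Qed.

Lemma abelian_clean_exchange : clean R -> exchange R.
Proof.
move=> Hclean a; have [e [u [He [[v [uv1 _]] ->]]]] := Hclean a.
have He' := idemC He.
exists (1 - e); split => //.
- exists ((1 - e) * v).
  by rewrite mulrA mulrDl idem_mulC // add0r -(idemZ He' u) -mulrA uv1 mulr1.
- exists (- (e * v)); rewrite subKr mulrN mulrA.
  have -> : (1 - (e + u)) * e = - (e * u).
    by rewrite mulrBl mul1r mulrDl He opprD addrA subrr add0r (idemZ He u).
  by rewrite mulNr opprK -mulrA uv1 mulr1.
Qed.

Lemma abelian_exchange_clean : exchange R -> clean R.
Proof.
move=> Hex a; have [e [He [r ear] [s es]]] := Hex a.
have He' := idemC He.
exists (1 - e), (a - (1 - e)); split; [exact: He' | split; last by rewrite subrKC].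
apply: (@abelian_unit_corners e _ r (- s) He).
- by rewrite mulrBl idem_Cmul // subr0 -mulrA (idemZ He r) mulrA -ear.
- have -> : (a - (1 - e)) * (1 - e) * - s = (1 - a) * (1 - e) * s.
    by rewrite mulrBl He' mulrN -mulNr opprB [X in _ = X * _]mulrBl mul1r.
  by rewrite -mulrA (idemZ He' s) mulrA -es.
Qed.

Lemma abelian_exchange_isr1 : exchange R -> isr1 R.
Proof.
move=> Hex a b Hab; have [x [y axby1]] := Hab 1.
have [e [He [r eaxr] [s es]]] := Hex (a * x).
have He' := idemC He; set f := 1 - e in He' es *.
have bf_inv : b * f * y * s = f.
  have by_eq : 1 - a * x = b * y by rewrite -axby1 addrAC subrr add0r.
  rewrite by_eq in es.
  by rewrite -!mulrA (idemZ He' (y * s)) !mulrA -es.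
have [g [w [Hg [[v [wv1 _]] gw]]]] := abelian_exchange_clean Hex (- (y * s * a * f)).
pose p := g * f.
have Hp : idem p by rewrite /idem /p mulrA -(mulrA g) (idemZ He' g) mulrA Hg -mulrA He'.
exists p; split => //.
apply: (@abelian_unit_corners e _ (x * r) (- (v * (y * s))) He).
- have pe0 : p * e = 0 by rewrite /p -mulrA idem_Cmul // mulr0.
  by rewrite mulrDl -mulrA pe0 mulr0 addr0 -mulrA (idemZ He (x * r)) !mulrA -eaxr.
- have Hw : w = - (y * s * a * f) - g by rewrite gw addrC addKr.
  have bfysaf : b * f * (y * s * a * f) = a * f.
    by rewrite !mulrA bf_inv (idemZ He' a) -mulrA He'.
  have bfg : b * f * g = b * p by rewrite -mulrA (idemZ He' g).
  have -> : (a + b * p) * f = - (b * f * w).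
    rewrite Hw (mulrBr (b * f)) mulrN bfysaf bfg opprB opprK.
    by rewrite mulrDl -mulrA -mulrA He' addrC.
  by rewrite mulrNN !mulrA -(mulrA _ w v) wv1 mulr1 bf_inv.
Qed.

End AbelianRing.

Section StarRing.
Variable R : pzRingType.
Variable star : R -> R.
Hypothesis Hstar : is_involution star.

Lemma star0 : star 0 = 0.
Proof.
case: Hstar => starD _; have := starD 0 0; rewrite addr0 => star00.
by apply: (addrI (star 0)); rewrite addr0 -star00.
Qed.

Lemma starN x : star (- x) = - star x.
Proof.
case: Hstar => starD _.
by apply/eqP; rewrite -subr_eq0 opprK -starD addNr star0.
Qed.

Lemma star1 : star 1 = 1.
Proof.
case: Hstar => _ [starM starK].
by have := starM (star 1) 1; rewrite mulr1 starK mulr1 => <-.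
Qed.

Lemma starB1 x : star (1 - x) = 1 - star x.
Proof. by case: Hstar => starD _; rewrite starD starN star1. Qed.

Lemma projC (p : R) : proj star p -> proj star (1 - p).
Proof. by case=> Hp sp; split; [apply: idemC | rewrite starB1 sp]. Qed.

(* [e + e x (1 - e)] is idempotent; its being self-adjoint forces
   [e x (1 - e) = 0]. *)
Lemma idem_are_proj_central : idem_are_proj star -> idem_central R.
Proof.
move=> Hproj e He; case: Hstar => starD [starM starK].
have [_ se] := Hproj e He.
have eCe0 x : e * x * (1 - e) = 0.
  have Hf : idem (e + e * x * (1 - e)).
    apply: idemDnil => //; first by rewrite !mulrA He.
      by rewrite -mulrA idem_Cmul // mulr0.
    by rewrite !mulrA -(mulrA _ (1 - e)) idem_Cmul // mulr0 !mul0r.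
  have [_ sf] := Hproj _ Hf.
  move: (congr1 (fun y => e * y) sf) => /=.
  rewrite starD !starM se starB1 se !mulrDr He !mulrA He idem_mulC // !mul0r.
  by move/addrI.
have Cee0 x : (1 - e) * x * e = 0.
  have := congr1 star (eCe0 (star x)).
  by rewrite !starM star0 starB1 se starK mulrA.
move=> x; transitivity (e * x * e).
- by apply/eqP; rewrite -subr_eq0 -[X in X - _]mulr1 -mulrBr eCe0.
- by apply/esym/eqP; rewrite -subr_eq0 -[X in X - _]mul1r -!mulrA -mulrBl mulrA Cee0.
Qed.

Lemma strongly_star_clean_idem_are_proj : strongly_star_clean star -> idem_are_proj star.
Proof.
move=> Hssc e He.
have [p [u [[Hp sp] [v [_ vu1]] pu a_eq]]] := Hssc e.
have u_eq : u = e - p by rewrite a_eq addrC addKr.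
have ep : e * p = p * e by rewrite a_eq mulrDl mulrDr pu.
have u_lreg z : u * z = 0 -> z = 0.
  by move=> uz0; rewrite -[z]mul1r -vu1 -mulrA uz0 mulr0.
have pe0 : p * e = 0.
  by apply: u_lreg; rewrite u_eq mulrBl !mulrA ep -mulrA He Hp subrr.
have pe'0 : (1 - p) * (1 - e) = 0.
  have eCp : e * (1 - p) = e by rewrite mulrBr mulr1 ep pe0 subr0.
  apply: u_lreg; rewrite mulrA u_eq mulrBl idem_mulC // subr0 eCp.
  exact: idem_mulC.
move: pe'0; rewrite mulrBr mulr1 mulrBl mul1r pe0 subr0.
by move/eqP; rewrite subr_eq0 => /eqP <-; apply: projC.
Qed.

Lemma idem_are_proj_star_abelian : idem_are_proj star -> star_abelian star.
Proof. by move=> Hproj p [Hp _]; apply: idem_are_proj_central Hproj p Hp. Qed.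

Lemma comm_psr1_strongly_star_clean :
  (forall a b : R, rcomax a b ->
     exists p, [/\ proj star p, p * a = a * p & unit_el (a + b * p)]) ->
  strongly_star_clean star.
Proof.
move=> Hcomm a; have [p [Hp pa Hu]] := Hcomm a (-1) (rcomaxN1 a).
exists p, (a + -1 * p); split => //; last by rewrite mulN1r subrKC.
by rewrite mulN1r mulrBr mulrBl pa.
Qed.

Lemma strongly_star_clean_clean : strongly_star_clean star -> clean R.
Proof. by move=> Hssc a; have [p [u [[Hp _] Hu _ ->]]] := Hssc a; exists p, u. Qed.

Lemma proj_exchange_idem_are_proj :
  (forall a : R, exists p, [/\ proj star p, in_rR a p & in_rR (1 - a) (1 - p)]) ->
  idem_are_proj star.
Proof.
move=> Hpex e He; have [p [[Hp sp] [r pr] [s ps]]] := Hpex e.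
have ep : e * p = p by rewrite pr mulrA He.
have : e * (1 - p) = 0 by rewrite ps mulrA idem_mulC // mul0r.
by rewrite mulrBr mulr1 ep => /eqP; rewrite subr_eq0 => /eqP ->.
Qed.

Lemma isr1_psr1 : isr1 R -> idem_are_proj star -> psr1 star.
Proof.
move=> Hisr Hproj a b Hab; have [e [He Hu]] := Hisr a b Hab.
by exists e; split => //; apply: Hproj.
Qed.

Lemma exchange_strongly_star_clean :
  exchange R -> idem_are_proj star -> strongly_star_clean star.
Proof.
move=> Hex Hproj a; have idemZ := idem_are_proj_central Hproj.
have [e [u [He [Hu ->]]]] := abelian_exchange_clean idemZ Hex a.
by exists e, u; split => //; [apply: Hproj | apply: idemZ].
Qed.

End StarRing.

Theorem theorem4p5 (R : pzRingType) (star : R -> R) (Hstar : is_involution star) :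
  [<-> psr1 star /\ star_abelian star;
       (forall a b : R, rcomax a b ->
          exists p, [/\ proj star p, p * a = a * p & unit_el (a + b * p)]);
       isr1 R /\ idem_are_proj star;
       clean R /\ idem_are_proj star;
       exchange R /\ idem_are_proj star;
       star_clean star /\ star_abelian star;
       strongly_star_clean star;
       (forall a : R, exists p, [/\ proj star p, in_rR a p & in_rR (1 - a) (1 - p)])].
Proof.
have central := idem_are_proj_central Hstar.
have abelian := idem_are_proj_star_abelian Hstar.
tfae.
- case=> Hpsr Habel a b Hab; have [p [Hp Hu]] := Hpsr a b Hab.
  by exists p; split => //; apply: Habel.
- move=> /comm_psr1_strongly_star_clean Hssc.
  have Hproj := strongly_star_clean_idem_are_proj Hstar Hssc.
  have Hex := abelian_clean_exchange (central Hproj) (strongly_star_clean_clean Hssc).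
  by split => //; apply: abelian_exchange_isr1 (central Hproj) Hex.
- by case=> Hisr Hproj; split => //; apply: isr1_clean.
- case=> Hclean Hproj; split => //.
  exact: abelian_clean_exchange (central Hproj) Hclean.
- case=> Hex Hproj; split; last exact: abelian Hproj.
  move=> a; have [p [u [Hp Hu _ ->]]] := exchange_strongly_star_clean Hstar Hex Hproj a.
  by exists p, u.
- case=> Hsc Habel a; have [p [u [Hp [Hu ->]]]] := Hsc a.
  by exists p, u; split => //; apply: Habel.
- move=> Hssc; have Hproj := strongly_star_clean_idem_are_proj Hstar Hssc.
  move=> a; have [e [He ea ea']] :=
    abelian_clean_exchange (central Hproj) (strongly_star_clean_clean Hssc) a.
  by exists e; split => //; apply: Hproj.
- move=> Hpex; have Hproj := proj_exchange_idem_are_proj Hpex.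
  have Hex : exchange R by move=> a; have [p [[Hp _] ? ?]] := Hpex a; exists p.
  split; last exact: abelian Hproj.
  exact: isr1_psr1 (abelian_exchange_isr1 (central Hproj) Hex) Hproj.
Qed.
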